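(* Let $T$ be a tree with $p\ge 3$ pendant vertices and let $u_1,u_2,u_3$ be three distinct pendant vertices of $T$. Let $H=\bigcup_{1\le i<j\le 3}P_{u_i,u_j}$ be the minimal subtree of $T$ containing these three vertices. If $m(T,1)\ge p-2$, then $m(H,1)\ge 1$.
   Context: $m(G,\lambda)$ denotes the multiplicity of $\lambda$ as an eigenvalue of the Laplacian matrix $L(G)=D(G)-A(G)$ (zero if not an eigenvalue). A pendant vertex has degree $1$. $P_{r,s}$ is the path in $T$ from $r$ to $s$. *)

From HB Require Import structures.
From mathcomp Require Import all_boot all_order all_algebra.
Set Implicit Arguments. Unset Strict Implicit. Unset Printing Implicit Defensive.
Import Order.TTheory GRing.Theory Num.Theory.

Definition simple_graph (V : finType) (e : rel V) : Prop :=
  symmetric e /\ irreflexive e.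

Definition deg (V : finType) (e : rel V) (x : V) : nat := #|[set y | e x y]|.

Definition pendant (V : finType) (e : rel V) (x : V) : bool := deg e x == 1%N.

Definition connected_graph (V : finType) (e : rel V) : Prop :=
  forall x y : V, connect e x y.

Definition acyclic (V : finType) (e : rel V) : Prop :=
  forall (x : V) (p : seq V), path e x p -> uniq (x :: p) -> (2 <= size p)%N ->
    ~~ e (last x p) x.

Definition is_tree (V : finType) (e : rel V) : Prop :=
  [/\ simple_graph e, (0 < #|V|)%N, connected_graph e & acyclic e].

(* x lies on the path P_{r,s}: x is a vertex of a simple path from r to s
   (in a tree this path is unique). *)
Definition on_path (V : finType) (e : rel V) (r s x : V) : Prop :=
  exists p : seq V, [/\ path e r p, last r p = s, uniq (r :: p) & x \in r :: p].

Definition laplacian (V : finType) (e : rel V) : 'M[rat]_#|V| :=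
  \matrix_(i, j) (if i == j then ((deg e (enum_val i))%:R)%R
                  else if e (enum_val i) (enum_val j) then (-1)%R else 0%R).

(* m(G, lambda): multiplicity of lambda as an eigenvalue of L(G), i.e. as a
   root of the characteristic polynomial (0 if not an eigenvalue). *)
Definition lap_mult (V : finType) (e : rel V) (lambda : rat) : nat :=
  mup lambda (char_poly (laplacian e)).

Definition num_pendant (V : finType) (e : rel V) : nat := #|[set x | pendant e x]|.

Definition induced (V : finType) (e : rel V) (S : {set V}) : rel {x : V | x \in S} :=
  fun x y => e (val x) (val y).
Arguments induced {V} e S _ _.

(* The Laplacian is symmetric, so m(T,1) is at most the dimension of the
   1-eigenspace.  That dimension exceeds p - 3, so some nonzero X with L X = X
   vanishes at the p - 3 pendant vertices other than u1, u2, u3.  Root T at u1: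
   H is closed under taking parents.  If c is a vertex with X c = 0 and X vanishes
   at all neighbours of c but one, the equation (L X) c = X c forces X to vanish
   at that last neighbour too.  Going up from the deepest vertices, X vanishes
   outside H and at every vertex of H with a neighbour outside H, so the
   restriction of X to H is a nonzero solution of L(H) Y = Y. *)

From mathcomp Require Import all_boot all_order all_algebra.
From mathcomp Require Import zify.
Set Implicit Arguments. Unset Strict Implicit. Unset Printing Implicit Defensive.
Import GRing.Theory Num.Theory.

Section CharPoly.
Local Open Scope ring_scope.
Variable F : fieldType.

Lemma char_poly_conj n (P A : 'M[F]_n) : P \in unitmx ->
  char_poly (invmx P *m A *m P) = char_poly A.
Proof.
move=> Pu; rewrite /char_poly /char_poly_mx.
set Q := map_mx polyC P; set Qi := map_mx polyC (invmx P).
have QiQ : Qi *m Q = 1%:M by rewrite -map_mxM mulVmx // map_mx1.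
have -> : 'X%:M - map_mx polyC (invmx P *m A *m P) =
          Qi *m ('X%:M - map_mx polyC A) *m Q.
  rewrite !map_mxM -/Qi -/Q mulmxBr mulmxBl; congr (_ - _).
  by rewrite -mulmxA -scalar_mxC mulmxA QiQ mul1mx.
by rewrite !det_mulmx mulrAC -det_mulmx QiQ det1 mul1r.
Qed.

Lemma char_poly_block_diag k m (A1 : 'M[F]_k) (A2 : 'M[F]_m) :
  char_poly (block_mx A1 0 0 A2) = char_poly A1 * char_poly A2.
Proof. by rewrite /char_poly char_block_diag_mx det_ublock. Qed.

Lemma char_poly_scalar k (a : F) : char_poly (a%:M : 'M_k) = ('X - a%:P) ^+ k.
Proof.
rewrite char_poly_trig ?scalar_mx_is_trig //.
under eq_bigr => i _ do rewrite mxE eqxx /=.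
by rewrite prodr_const card_ord.
Qed.

Lemma char_poly_eigen_split n k m (A : 'M[F]_n) (B : 'M_(k, n)) (C : 'M_(m, n))
    (M : 'M_m) (a : F) : (k + m)%N = n ->
  row_full (col_mx B C) -> B *m A = a *: B -> C *m A = M *m C ->
  char_poly A = ('X - a%:P) ^+ k * char_poly M.
Proof.
move=> kmn; subst n => BCfull BA CA; set P := col_mx B C.
have Pu : P \in unitmx by rewrite -row_full_unit.
have PA : P *m A = block_mx a%:M 0 0 M *m P.
  by rewrite mul_col_mx mul_block_col !mul0mx addr0 add0r mul_scalar_mx BA CA.
have -> : A = invmx P *m block_mx a%:M 0 0 M *m P by rewrite -mulmxA -PA mulKmx.
by rewrite char_poly_conj // char_poly_block_diag char_poly_scalar.
Qed.

Lemma eigenvector_vanishing n (A : 'M[F]_n) (a : F) (J : {set 'I_n}) :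
  (#|J| < \rank (eigenspace A a))%N ->
  exists x : 'rV_n, [/\ x *m A = a *: x, x != 0 & {in J, forall j, x 0 j = 0}].
Proof.
move=> ltJE.
pose Sel := \matrix_(i < n, j < #|J|) ((i == enum_val j)%:R : F).
have : (0 < \rank (eigenspace A a :&: kermx Sel))%N.
  have := mxrank_sum_cap (eigenspace A a) (kermx Sel).
  have := rank_leq_col (eigenspace A a + kermx Sel)%MS.
  rewrite mxrank_ker; have := rank_leq_col Sel; lia.
rewrite lt0n mxrank_eq0 => /rowV0Pn [x]; rewrite sub_capmx.
case/andP => /eigenspaceP xA /sub_kermxP xSel x0; exists x; split => // j jJ.
move/matrixP: xSel => /(_ 0 (enum_rank_in jJ j)); rewrite !mxE.
rewrite (bigD1 j) //= big1 ?addr0 => [|i ij]; rewrite mxE (enum_rankK_in jJ jJ).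
  by rewrite eqxx mulr1.
by rewrite (negPf ij) mulr0.
Qed.

End CharPoly.

Section SymmetricMatrix.
Local Open Scope ring_scope.
Variable F : realFieldType.

Lemma rowv_mul_tr_eq0 n (v : 'rV[F]_n) : v *m v^T = 0 -> v = 0.
Proof.
move=> /matrixP/(_ 0 0); rewrite !mxE.
under eq_bigr => j _ do rewrite [v^T _ _]mxE.
move=> sum0; apply/rowP => i; rewrite mxE.
have sq_ge0 j : xpredT j -> 0 <= v 0 j * v 0 j by rewrite -expr2 sqr_ge0.
have /eqP := psumr_eq0P sq_ge0 sum0 (i := i) isT.
by rewrite mulf_eq0 orbb => /eqP.
Qed.

(* The orthogonal complement [W] of the eigenspace is [A]-stable because [A]
   is symmetric, and [a] is not an eigenvalue of [A] restricted to [W]. *)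
Lemma mup_char_poly_sym n (A : 'M[F]_n) (a : F) : A^T = A ->
  (mup a (char_poly A) <= \rank (eigenspace A a))%N.
Proof.
move=> Asym.
set E := eigenspace A a; set B := row_base E; set W := kermx B^T.
set C := row_base W.
have BA : B *m A = a *: B.
  have /sub_kermxP : (B <= E)%MS by rewrite eq_row_base.
  by rewrite mulmxBr mul_mx_scalar => /eqP; rewrite subr_eq0 => /eqP.
have BW0 (v : 'rV_n) : (v <= B)%MS -> (v <= W)%MS -> v = 0.
  move=> /submxP [y ->] /sub_kermxP vW; apply: rowv_mul_tr_eq0.
  by rewrite trmx_mul mulmxA vW mul0mx.
have CW : (C :=: W)%MS by apply: eq_row_base.
have CA_C : (C *m A <= C)%MS.
  rewrite CW; apply/sub_kermxP.
  rewrite -mulmxA -{1}Asym -trmx_mul BA linearZ /= -scalemxAr.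
  have /sub_kermxP -> : (C <= W)%MS by rewrite CW.
  by rewrite scaler0.
set M := C *m A *m pinvmx C.
have CA : C *m A = M *m C by rewrite mulmxKpV.
have rB : \rank B = \rank E by rewrite eq_row_base.
have rW : \rank W = (n - \rank E)%N by rewrite mxrank_ker mxrank_tr rB.
have EWn : (\rank E + \rank W)%N = n by rewrite rW subnKC // rank_leq_col.
have BCfull : row_full (col_mx B C).
  have BC0 : \rank (B :&: C)%MS = 0%N.
    apply/eqP; rewrite mxrank_eq0; apply/rowV0P => v.
    by rewrite sub_capmx => /andP[vB vC]; apply: BW0; rewrite -?CW.
  rewrite /row_full -addsmxE.
  by have := mxrank_sum_cap B C; rewrite BC0 addn0 rB CW => ->; rewrite EWn.
rewrite (char_poly_eigen_split EWn BCfull BA CA) mupMl ?mup_XsubCX ?eqxx //.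
rewrite -eigenvalue_root_char; apply/negP => /eigenvalueP [z zM z0].
have zC0 : z *m C = 0.
  apply: BW0; last by rewrite -CW submxMl.
  rewrite eq_row_base; apply/sub_kermxP.
  by rewrite mulmxBr mul_mx_scalar -mulmxA CA mulmxA zM scalemxAl subrr.
by move: z0; rewrite -(mulmx_free_eq0 _ (row_base_free W)) zC0 eqxx.
Qed.

End SymmetricMatrix.

(* [L X = X], written vertexwise. *)
Definition lap_fixed (V : finType) (e : rel V) (X : V -> rat) : Prop :=
  forall v, (\sum_(w | e v w) X w = ((deg e v)%:R - 1) * X v)%R.

Section Laplacian.
Local Open Scope ring_scope.
Variables (V : finType) (e : rel V).
Hypotheses (esym : symmetric e) (eirr : irreflexive e).

Definition vertex_row (X : V -> rat) : 'rV[rat]_#|V| := \row_i X (enum_val i).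

Lemma laplacian_tr : (laplacian e)^T = laplacian e.
Proof.
apply/matrixP => i j; rewrite !mxE eq_sym.
by case: eqP => [->|_] //; rewrite esym.
Qed.

Lemma vertex_row_laplacian X v :
  (vertex_row X *m laplacian e) 0 (enum_rank v) =
  (deg e v)%:R * X v - \sum_(w | e v w) X w.
Proof.
rewrite mxE /laplacian (reindex (@enum_rank V)) /=; last first.
  by apply: onW_bij; apply: enum_rank_bij.
rewrite (bigD1 v) //= !mxE !enum_rankK eqxx mulrC; congr (_ + _).
rewrite (bigID (e v)) /= [X in _ + X]big1 ?addr0; last first.
  move=> w /andP[wv evw]; rewrite !mxE !enum_rankK (inj_eq enum_rank_inj).
  by rewrite (negPf wv) esym (negPf evw) mulr0.
apply: (eq_trans _ (sumrN _ _ _)); apply: eq_big => w.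
  case evw: (e v w); rewrite ?andbT ?andbF //.
  by apply: contraTneq evw => ->; rewrite eirr.
move=> /andP[wv evw]; rewrite !mxE !enum_rankK (inj_eq enum_rank_inj) (negPf wv).
by rewrite esym evw mulrN1.
Qed.

Lemma lap_fixedP X : vertex_row X *m laplacian e = vertex_row X <-> lap_fixed e X.
Proof.
split => [XL v|fixX].
  have := vertex_row_laplacian X v; rewrite XL mxE enum_rankK => /eqP.
  by rewrite eq_sym subr_eq addrC -subr_eq mulrBl mul1r => /eqP ->.
apply/rowP => i; rewrite -(enum_valK i) vertex_row_laplacian fixX mxE enum_rankK.
by rewrite mulrBl mul1r opprB addrCA subrr addr0.
Qed.

Lemma ex_lap_fixed_vanishing (J : {set V}) : (#|J| < lap_mult e 1)%N ->
  exists X, [/\ lap_fixed e X, exists v, X v != 0 & {in J, forall v, X v = 0}].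
Proof.
move=> ltJ.
have [|x [xL x0 xJ]] :=
  @eigenvector_vanishing _ _ (laplacian e) 1 (enum_rank @: J).
  rewrite card_imset; last exact: enum_rank_inj.
  exact: leq_trans ltJ (mup_char_poly_sym _ laplacian_tr).
pose X v := x 0 (enum_rank v).
have xX : vertex_row X = x by apply/rowP => i; rewrite mxE /X enum_valK.
exists X; split; first by apply/lap_fixedP; rewrite xX xL scale1r.
  have /existsP [i xi] : [exists i, x 0 i != 0].
    apply: contraNT x0 => /existsPn x0; apply/eqP/rowP => i.
    by rewrite mxE; apply/eqP/negPn/x0.
  by exists (enum_val i); rewrite /X enum_valK.
by move=> v vJ; apply: xJ; apply: imset_f.
Qed.

Lemma lap_mult1_gt0 X v : lap_fixed e X -> X v != 0 -> (0 < lap_mult e 1)%N.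
Proof.
move=> /lap_fixedP XL Xv.
have : eigenvalue (laplacian e) 1.
  apply/eigenvalueP; exists (vertex_row X); first by rewrite scale1r.
  apply: contra_neq Xv => /rowP/(_ (enum_rank v)).
  by rewrite !mxE enum_rankK.
rewrite eigenvalue_root_char -dvdp_XsubCl XsubC_dvd //.
by rewrite monic_neq0 // char_poly_monic.
Qed.

Lemma lap_fixed_adj0 X c v : lap_fixed e X -> X c = 0 -> e c v ->
  (forall w, e c w -> w != v -> X w = 0) -> X v = 0.
Proof.
move=> fixX Xc ecv Xnbr; have := fixX c.
rewrite Xc mulr0 (bigD1 v) //= big1 ?addr0 // => w /andP[].
exact: Xnbr.
Qed.

End Laplacian.

Section Induced.
Local Open Scope ring_scope.
Variables (V : finType) (e : rel V) (S : {set V}).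

Lemma deg_induced u : deg (induced e S) u = #|[set v in S | e (val u) v]|.
Proof.
rewrite /deg -(card_imset _ val_inj); apply: eq_card => v; rewrite !inE.
apply/imsetP/andP => [[w] | [vS euv]].
  by rewrite inE => euw ->; split => //; apply: valP.
by exists (exist _ v vS); rewrite // inE.
Qed.

Lemma lap_fixed_induced X : lap_fixed e X ->
  (forall v, v \notin S -> X v = 0) ->
  (forall s c, s \in S -> e s c -> c \notin S -> X s = 0) ->
  lap_fixed (induced e S) (fun u => X (val u)).
Proof.
move=> fixX offS bdS u; set s := val u; have sS : s \in S := valP u.
have -> : \sum_(w | induced e S u w) X (val w) = \sum_(v | e s v) X v.
  rewrite /induced -(big_sub_cond S (e s) X) [RHS](bigID (mem S)) /=.
  rewrite [X in _ + X]big1 ?addr0 => [|v /andP[_ /offS]] //.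
  by apply: eq_bigl => v; rewrite andbC.
rewrite fixX deg_induced.
have [/forallP inS|] := boolP [forall v, e s v ==> (v \in S)].
  congr ((_%:R - 1) * _); apply: eq_card => v; rewrite !inE.
  by case esv: (e s v); rewrite ?andbF // (implyP (inS v) esv).
rewrite negb_forall => /existsP [c]; rewrite negb_imply => /andP[esc cS].
by rewrite (bdS s c sS esc cS) !mulr0.
Qed.

End Induced.

Section Tree.
Variables (V : finType) (e : rel V).
Hypotheses (esym : symmetric e) (eirr : irreflexive e) (eacy : acyclic e).

Lemma path_rev_belast (x : V) p :
  path e x p -> path e (last x p) (rev (belast x p)).
Proof.
by move=> xp; rewrite rev_path; apply: sub_path xp => a b /=; rewrite esym.
Qed.

Lemma last_rev_belast (x : V) p : last (last x p) (rev (belast x p)) = x.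
Proof. by elim: p x => //= y p IHp x; rewrite rev_cons last_rcons. Qed.

(* Two distinct simple paths with the same ends close up, after shortening, into
   a cycle through [x]. *)
Lemma simple_path_unique (x : V) p q :
  path e x p -> uniq (x :: p) -> path e x q -> uniq (x :: q) ->
  last x p = last x q -> p = q.
Proof.
elim: p x q => [|a p IHp] x [|b q] //=.
- by move=> _ _ _ /and3P[xq _ _] xl; rewrite xl mem_last in xq.
- by move=> _ /and3P[xp _ _] _ _ xl; rewrite -xl mem_last in xp.
move=> /andP[exa ap] /and3P[xap ap_uniq up].
move=> /andP[exb bq] /and3P[xbq bq_uniq uq] pq.
have [ab|ab] := eqVneq a b.
  by subst b; rewrite (IHp a q) //= ?ap_uniq ?bq_uniq.
exfalso.
set w := p ++ rev (belast b q).
have aw : path e a w by rewrite cat_path ap /= pq; apply: path_rev_belast.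
have : last a w = b by rewrite last_cat pq last_rev_belast.
case: (shortenP aw) => c ac ac_uniq cw cb.
have xc : x \notin a :: c.
  rewrite inE negb_or; apply/andP; split.
    by apply: contra xap => /eqP ->; apply: mem_head.
  apply/negP => /cw; rewrite mem_cat mem_rev; apply/negP; rewrite negb_or.
  apply/andP; split; first by apply: contra xap => xp; rewrite inE xp orbT.
  by apply/negP => /mem_belast; apply/negP.
have c_gt0 : (1 < (size c).+1)%N.
  by case: c {ac ac_uniq cw xc} cb => [/= ba|//]; rewrite ba eqxx in ab.
have xac : path e x (a :: c) by rewrite /= exa.
have uxac : uniq (x :: a :: c) by rewrite cons_uniq xc.
by move: (eacy xac uxac c_gt0); rewrite /= cb esym exb.
Qed.

Section Rooted.
Variable r : V.
Hypothesis conn : forall v, connect e r v.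

Lemma ex_rpath v : exists p, [&& path e r p, last r p == v & uniq (r :: p)].
Proof.
have /connectP [p rp ->] := conn v.
by case: (shortenP rp) => q rq uq _; exists q; rewrite rq eqxx uq.
Qed.

Definition rpath v := xchoose (ex_rpath v).

Lemma rpathP v :
  [/\ path e r (rpath v), last r (rpath v) = v & uniq (r :: rpath v)].
Proof. by have /and3P[? /eqP ? ?] := xchooseP (ex_rpath v). Qed.

Lemma rpath_unique v p :
  path e r p -> last r p = v -> uniq (r :: p) -> p = rpath v.
Proof.
case: (rpathP v) => rv lv uv rp lp up; apply: (simple_path_unique rp up rv uv).
by rewrite lp lv.
Qed.

Lemma mem_rpath v : v \in r :: rpath v.
Proof. by case: (rpathP v) => _ lv _; rewrite -{1}lv mem_last. Qed.

Lemma size_rpath v : (size (rpath v) < #|V|)%N.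
Proof. by case: (rpathP v) => _ _ /card_uniqP /= <-; apply: max_card. Qed.

Lemma rpath_prefix v w : w \in r :: rpath v -> exists p, rpath v = rpath w ++ p.
Proof.
move=> wv; case: (rpathP v) => + _; case/splitPl: wv => p1 p2 lp1.
rewrite cat_path -cat_cons cat_uniq => /andP[rp1 _] /andP[up1 _].
by exists p2; congr (_ ++ _); apply: rpath_unique.
Qed.

Lemma rpath_adj v w : e v w ->
  rpath w = rcons (rpath v) w \/ rpath v = rcons (rpath w) v.
Proof.
move=> evw; case: (rpathP v) => rv lv uv; case: (rpathP w) => rw lw uw.
have [wv|wv] := boolP (w \in r :: rpath v); last first.
  left; symmetry; apply: rpath_unique; rewrite ?last_rcons //.
    by rewrite rcons_path rv lv evw.
  by rewrite -rcons_cons rcons_uniq wv uv.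
have [vw|vw] := boolP (v \in r :: rpath w); last first.
  right; symmetry; apply: rpath_unique; rewrite ?last_rcons //.
    by rewrite rcons_path rw lw esym evw.
  by rewrite -rcons_cons rcons_uniq vw uw.
have [p2 vp2] := rpath_prefix wv; have [p3 wp3] := rpath_prefix vw.
have : rpath v = rpath v ++ (p3 ++ p2) by rewrite catA -wp3 -vp2.
move/(congr1 size)/eqP; rewrite size_cat -{1}[size _]addn0 eqn_add2l eq_sym.
rewrite -/(nilp _) cat_nilp => /andP[/nilP p30 _].
have : last r (rpath v) = last r (rpath w) by rewrite wp3 p30 cats0.
by rewrite lv lw => vw0; rewrite vw0 eirr in evw.
Qed.

Lemma rpath_parent v : v != r -> exists p, e p v /\ rpath v = rcons (rpath p) v.
Proof.
move=> vr; case: (rpathP v); case/lastP: (rpath v) => [/= _ rv|q y].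
  by rewrite rv eqxx in vr.
rewrite rcons_path last_rcons => /andP[rq qy] <-.
rewrite -rcons_cons rcons_uniq => /andP[_ uq].
by exists (last r q); split => //; congr rcons; apply: rpath_unique.
Qed.

Lemma rpath_child v c p : e v c -> rpath v = rcons (rpath p) v -> c != p ->
  rpath c = rcons (rpath v) c.
Proof.
move=> evc vp cp; case: (rpath_adj evc) => // vc.
have pc : rpath p = rpath c by apply: (@rcons_injl _ v); rewrite -vp -vc.
have [_ lc _] := rpathP c; move: cp; rewrite -{1}lc -pc.
by case: (rpathP p) => _ -> _; rewrite eqxx.
Qed.

Section AncestorClosed.
Local Open Scope ring_scope.
Variable S : pred V.
Hypothesis S_root : S r.
Hypothesis S_parent : forall v w, S v -> rpath v = rcons (rpath w) v -> S w.

Lemma child_notin v c : ~~ S v -> rpath c = rcons (rpath v) c -> ~~ S c.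
Proof. by move=> nSv vc; apply: contra nSv => Sc; apply: S_parent vc. Qed.

Variable X : V -> rat.
Hypothesis fixX : lap_fixed e X.
Hypothesis X_leaf : forall v, deg e v = 1%N -> ~~ S v -> X v = 0.

(* Induction from the deepest vertices up: a non-pendant [v] outside [S] has a
   child [c], all of whose other neighbours are children of [c]. *)
Lemma lap_fixed_notin0 v : ~~ S v -> X v = 0.
Proof.
suff IH k : forall v, (#|V| <= size (rpath v) + k)%N -> ~~ S v -> X v = 0.
  by apply: (IH #|V|); rewrite leq_addl.
elim: k => [|k IHk] {}v vk nSv.
  by have := size_rpath v; rewrite ltnNge -[size _]addn0 vk.
have vr : v != r by apply: contraNneq nSv => ->.
have [p [epv vp]] := rpath_parent vr.
have [leaf|nleaf] := eqVneq (deg e v) 1%N; first exact: X_leaf.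
have : (0 < #|[set y | e v y] :\ p|)%N.
  by move: nleaf; rewrite /deg (cardsD1 p) inE esym epv add1n; case: #|_ :\ p|.
case/card_gt0P => c; rewrite !inE => /andP[cp evc].
have vc := rpath_child evc vp cp.
have ecv : e c v by rewrite esym.
apply: (lap_fixed_adj0 fixX _ ecv) => [|w ecw wv].
  by apply: IHk (child_notin nSv vc); move: vk; rewrite vc size_rcons; lia.
have cw := rpath_child ecw vc wv.
apply: IHk (child_notin (child_notin nSv vc) cw).
by move: vk; rewrite cw vc !size_rcons; lia.
Qed.

Lemma lap_fixed_boundary0 s c : S s -> e s c -> ~~ S c -> X s = 0.
Proof.
move=> Ss esc nSc.
have sc : rpath c = rcons (rpath s) c.
  by case: (rpath_adj esc) => // cs; rewrite (S_parent Ss cs) in nSc.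
have ecs : e c s by rewrite esym.
apply: (lap_fixed_adj0 fixX (lap_fixed_notin0 nSc) ecs) => w ecw ws.
by apply/lap_fixed_notin0/(child_notin nSc)/(rpath_child ecw sc ws).
Qed.

End AncestorClosed.

Definition rpath_union a b v := (v \in r :: rpath a) || (v \in r :: rpath b).

Lemma rpath_union_parent a b v w :
  rpath_union a b v -> rpath v = rcons (rpath w) v -> rpath_union a b w.
Proof.
have anc u :
    v \in r :: rpath u -> rpath v = rcons (rpath w) v -> w \in r :: rpath u.
  move=> vu vw; have [p up] := rpath_prefix vu; have := mem_rpath w.
  by rewrite up vw !inE mem_cat mem_rcons !inE => /orP[] ->; rewrite ?orbT.
by case/orP => vab vw; apply/orP; [left|right]; apply: anc.
Qed.

Lemma rpath_union_on_path a b v : rpath_union a b v <->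
  on_path e r a v \/ on_path e r b v \/ on_path e a b v.
Proof.
case: (rpathP a) => ra la ua; case: (rpathP b) => rb lb ub.
split.
  by case/orP => [va|vb]; [left; exists (rpath a)|right; left; exists (rpath b)].
case=> [[p [rp lp up vp]]|[[p [rp lp up vp]]|[p [ap lp up vp]]]].
- by rewrite /rpath_union -(rpath_unique rp lp up) vp.
- by rewrite /rpath_union -(rpath_unique rp lp up) vp orbT.
set w := rev (belast r (rpath a)) ++ rpath b.
have la_rev : last a (rev (belast r (rpath a))) = r.
  by rewrite -{1}la last_rev_belast.
have aw : path e a w.
  by rewrite cat_path la_rev rb andbT -{1}la path_rev_belast.
have : last a w = b by rewrite last_cat la_rev.
case: (shortenP aw) => q aq uq qw qb.
move: vp; rewrite (simple_path_unique ap up aq uq) ?lp ?qb // inE.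
case/orP => [/eqP ->|/qw]; first by rewrite /rpath_union -{1}la mem_last.
rewrite mem_cat mem_rev => /orP[/mem_belast va|vb]; apply/orP; [left|right] => //.
by rewrite inE vb orbT.
Qed.

Lemma lap_fixed_rpath_union0 a b X : lap_fixed e X ->
  (forall v, deg e v = 1%N -> ~~ rpath_union a b v -> X v = 0%R) ->
  (forall v, ~~ rpath_union a b v -> X v = 0%R) /\
  (forall s c, rpath_union a b s -> e s c -> ~~ rpath_union a b c -> X s = 0%R).
Proof.
have root : rpath_union a b r by rewrite /rpath_union mem_head.
move=> fixX X_leaf; split.
  exact: (lap_fixed_notin0 root (@rpath_union_parent a b) fixX X_leaf).
exact: (lap_fixed_boundary0 root (@rpath_union_parent a b) fixX X_leaf).
Qed.

End Rooted.

End Tree.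

Lemma card_pendant_setD3 (V : finType) (e : rel V) (u1 u2 u3 : V) :
  pendant e u1 -> pendant e u2 -> pendant e u3 ->
  u1 != u2 -> u1 != u3 -> u2 != u3 ->
  #|[set v | pendant e v] :\: [set u1; u2; u3]| = (num_pendant e - 3)%N.
Proof.
move=> pu1 pu2 pu3 n12 n13 n23.
have sub3 : [set u1; u2; u3] \subset [set v | pendant e v].
  by apply/subsetP => v; rewrite !inE => /orP[/orP[]|] /eqP ->.
have card3 : #|[set u1; u2; u3]| = 3.
  by rewrite -setUA cardsU1 !inE negb_or n12 n13 cards2 n23.
by rewrite cardsD (setIidPr sub3) card3.
Qed.

Theorem mainTheorem12 (V : finType) (e : rel V) (u1 u2 u3 : V) (S : {set V}) :
  is_tree e ->
  (3 <= num_pendant e)%N ->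
  pendant e u1 -> pendant e u2 -> pendant e u3 ->
  u1 != u2 -> u1 != u3 -> u2 != u3 ->
  (forall x, x \in S <->
     on_path e u1 u2 x \/ on_path e u1 u3 x \/ on_path e u2 u3 x) ->
  (num_pendant e - 2 <= lap_mult e 1%R)%N ->
  (1 <= lap_mult (induced e S) 1%R)%N.
Proof.
move=> [[esym eirr] _ conn acy] p3 pu1 pu2 pu3 n12 n13 n23 defS hm.
have conn1 v : connect e u1 v by apply: conn.
pose H := rpath_union conn1 u2 u3.
have SH v : (v \in S) = H v.
  have HP := rpath_union_on_path esym acy conn1 u2 u3 v.
  by apply/idP/idP => [/defS/HP|/HP/defS].
pose J := [set v | pendant e v] :\: [set u1; u2; u3].
have ltJ : (#|J| < lap_mult e 1)%N.
  by move: p3 hm; rewrite card_pendant_setD3 //; lia.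
have [X [fixX [v Xv] XJ]] := ex_lap_fixed_vanishing esym eirr ltJ.
have X_leaf w : deg e w = 1%N -> ~~ H w -> X w = 0%R.
  move=> dw; apply: contraNeq => Xw.
  have : w \notin J by apply: contra Xw => /XJ ->.
  rewrite !inE /pendant dw eqxx andbT negbK /H /rpath_union.
  by case/orP => [/orP[]|] /eqP ->; rewrite ?mem_head ?mem_rpath ?orbT.
have [offH bdH] :=
  lap_fixed_rpath_union0 esym eirr acy (conn := conn1) fixX X_leaf.
have offS w : w \notin S -> X w = 0%R by rewrite SH; apply: offH.
have bdS s c : s \in S -> e s c -> c \notin S -> X s = 0%R.
  by rewrite !SH; apply: bdH.
have vS : v \in S by apply: contraR Xv => /offS ->.
have isym : symmetric (induced e S) by move=> a b; apply: esym.
have iirr : irreflexive (induced e S) by move=> a; apply: eirr.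
have fixH := lap_fixed_induced fixX offS bdS.
exact: (lap_mult1_gt0 isym iirr fixH (v := exist _ v vS)).
Qed.
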